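(* Let $A,B,C\in\mathbb C^{2\times2}$ be Hermitian, let $\xi>0$ and $\varepsilon\ge 0$, and suppose $\Delta(B)=\lambda_{\max}(B)-\lambda_{\min}(B)>\xi$. If $\|[A,B]\|\le\varepsilon$ and $\|[B,C]\|\le\varepsilon$, then $$\|[A,C]\|\le\frac{2\varepsilon}{\xi}\Big(\|A\|+\|C\|+\frac{\varepsilon}{\xi}\Big).$$ In particular, if moreover $\|A\|\le1$, $\|C\|\le1$ and $\xi\ge\varepsilon>0$, then $\|[A,C]\|\le\frac{4\varepsilon}{\xi}+\frac{2\varepsilon^2}{\xi^2}\le\frac{6\varepsilon}{\xi}$.
   Context: $\|\cdot\|$ is the operator norm, $[X,Y]=XY-YX$; $\lambda_{\max},\lambda_{\min}$ denote the largest and smallest eigenvalues. *)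

From HB Require Import structures.
From mathcomp Require Import all_boot all_order all_algebra.
From mathcomp Require Import complex.
From mathcomp Require Import boolp classical_sets reals.
Set Implicit Arguments. Unset Strict Implicit. Unset Printing Implicit Defensive.
Import Order.TTheory GRing.Theory Num.Theory.
Local Open Scope ring_scope.
Local Open Scope classical_set_scope.

Section Defs.
Variable R : realType.

Definition vnorm (x : 'cV[R[i]]_2) : R :=
  Num.sqrt (\sum_(k < 2) (Normc.normc (x k ord0)) ^+ 2).

Definition opnorm (M : 'M[R[i]]_2) : R :=
  sup [set vnorm (M *m x) | x in [set x : 'cV[R[i]]_2 | vnorm x = 1]].

Definition herm2 (M : 'M[R[i]]_2) : Prop :=
  forall i j : 'I_2, M i j = conjc (M j i).

Definition comm (X Y : 'M[R[i]]_2) : 'M[R[i]]_2 := X *m Y - Y *m X.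

Definition lmax (M : 'M[R[i]]_2) : R :=
  sup [set l : R | eigenvalue M (Complex l 0)].
Definition lmin (M : 'M[R[i]]_2) : R :=
  inf [set l : R | eigenvalue M (Complex l 0)].
End Defs.

(* Write the traceless part of a Hermitian 2x2 matrix M in the Pauli basis as
   a vector m of R^3.  Then [A, B] = 2i (a x b).sigma, whose square is the
   scalar 4 |a x b|^2, so ||[A, B]|| = 2 |a x b|; moreover ||A|| >= |a| and
   the spectral gap of B is 2 |b|.  Everything thus reduces to the vector
   inequality
     |b|^2 |a x c| <= |b| (|a| |b x c| + |c| |a x b|) + |a x b| |b x c|,
   obtained by splitting a and c into their components along b and
   orthogonal to b. *)

From HB Require Import structures.
From mathcomp Require Import all_boot all_order all_algebra.
From mathcomp Require Import complex.
From mathcomp Require Import boolp classical_sets reals.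
From mathcomp Require Import ring lra.
Set Implicit Arguments. Unset Strict Implicit. Unset Printing Implicit Defensive.
Import Order.TTheory GRing.Theory Num.Theory.
Local Open Scope ring_scope.

Section Vec3.
Variable R : rcfType.

Record vec3 := Vec3 { vx : R; vy : R; vz : R }.

Definition dot (u v : vec3) : R := vx u * vx v + vy u * vy v + vz u * vz v.
Definition cross (u v : vec3) : vec3 :=
  Vec3 (vy u * vz v - vz u * vy v) (vz u * vx v - vx u * vz v)
       (vx u * vy v - vy u * vx v).
Definition addv (u v : vec3) : vec3 := Vec3 (vx u + vx v) (vy u + vy v) (vz u + vz v).
Definition scalev (k : R) (v : vec3) : vec3 := Vec3 (k * vx v) (k * vy v) (k * vz v).
Definition norm3 (v : vec3) : R := Num.sqrt (dot v v).

Implicit Types a b c u v x : vec3.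

Lemma dotC u v : dot u v = dot v u.
Proof. by rewrite /dot; ring. Qed.

Lemma dotvv_ge0 v : 0 <= dot v v.
Proof. by rewrite /dot !addr_ge0 // -expr2 sqr_ge0. Qed.

Lemma norm3_ge0 v : 0 <= norm3 v.
Proof. exact: sqrtr_ge0. Qed.

Lemma sqr_norm3 v : norm3 v ^+ 2 = dot v v.
Proof. by rewrite sqr_sqrtr ?dotvv_ge0. Qed.

Lemma dot_cross_l b x : dot b (cross b x) = 0.
Proof. by case: b x => ? ? ? [? ? ?]; rewrite /dot /cross /=; ring. Qed.

Lemma dot_cross_r b x : dot b (cross x b) = 0.
Proof. by case: b x => ? ? ? [? ? ?]; rewrite /dot /cross /=; ring. Qed.

Lemma lagrange_identity u v :
  dot (cross u v) (cross u v) + dot u v ^+ 2 = dot u u * dot v v.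
Proof. by case: u v => ? ? ? [? ? ?]; rewrite /dot /cross /=; ring. Qed.

Lemma cauchy_schwarz u v : `|dot u v| <= norm3 u * norm3 v.
Proof.
rewrite -sqrtr_sqr -sqrtrM ?dotvv_ge0 // ler_sqrt ?mulr_ge0 ?dotvv_ge0 //.
by rewrite -lagrange_identity lerDr dotvv_ge0.
Qed.

Lemma norm3_cross_le u v : norm3 (cross u v) <= norm3 u * norm3 v.
Proof.
rewrite /norm3 -sqrtrM ?dotvv_ge0 // ler_sqrt ?mulr_ge0 ?dotvv_ge0 //.
by rewrite -lagrange_identity lerDl sqr_ge0.
Qed.

Lemma norm3_cross_orth u v : dot u v = 0 -> norm3 (cross u v) = norm3 u * norm3 v.
Proof.
by move=> uv0; rewrite /norm3 -sqrtrM ?dotvv_ge0 // -lagrange_identity uv0 expr0n addr0.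
Qed.

Lemma norm3_crossC u v : norm3 (cross u v) = norm3 (cross v u).
Proof.
by case: u v => ? ? ? [? ? ?]; rewrite /norm3 /dot /cross /=; congr Num.sqrt; ring.
Qed.

Lemma norm3_scalev k v : norm3 (scalev k v) = `|k| * norm3 v.
Proof.
have sqk : dot (scalev k v) (scalev k v) = k ^+ 2 * dot v v.
  by case: v => ? ? ?; rewrite /dot /scalev /=; ring.
by rewrite /norm3 sqk sqrtrM ?sqr_ge0 // sqrtr_sqr.
Qed.

Lemma norm3_addv_le u v : norm3 (addv u v) <= norm3 u + norm3 v.
Proof.
have expand : dot (addv u v) (addv u v) = dot u u + 2 * dot u v + dot v v.
  by case: u v => ? ? ? [? ? ?]; rewrite /dot /addv /=; ring.
rewrite -(ger0_norm (addr_ge0 (norm3_ge0 u) (norm3_ge0 v))) -sqrtr_sqr.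
rewrite ler_sqrt ?sqr_ge0 // expand sqrrD !sqr_norm3 lerD2r lerD2l.
by have := cauchy_schwarz u v; have := ler_norm (dot u v); lra.
Qed.

(* Cross the decompositions |b|^2 a = (a.b) b + b x (a x b) and
   |b|^2 c = (c.b) b + b x (c x b); the (a.b)(c.b) b x b term vanishes. *)
Lemma cross_decomp_along a b c :
  scalev (dot b b ^+ 2) (cross a c) =
  addv (addv (scalev (dot a b) (cross b (cross b (cross c b))))
             (scalev (dot c b) (cross (cross b (cross a b)) b)))
       (cross (cross b (cross a b)) (cross b (cross c b))).
Proof.
case: a b c => ? ? ? [? ? ?] [? ? ?].
by rewrite /scalev /addv /cross /dot /=; congr Vec3; ring.
Qed.

Lemma norm3_cross_le_along a b c : 0 < norm3 b ->
  norm3 (cross a c) <=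
  (norm3 a * norm3 (cross b c) + norm3 c * norm3 (cross a b)) / norm3 b
  + norm3 (cross a b) * norm3 (cross b c) / norm3 b ^+ 2.
Proof.
move=> b_gt0; set r := norm3 b.
have r4 : norm3 (scalev (dot b b ^+ 2) (cross a c)) = r ^+ 4 * norm3 (cross a c).
  by rewrite norm3_scalev -sqr_norm3 -exprM ger0_norm ?exprn_ge0 ?norm3_ge0.
have bbcb : norm3 (cross b (cross c b)) = r * norm3 (cross b c).
  by rewrite norm3_cross_orth ?dot_cross_r // norm3_crossC.
have bab : norm3 (cross b (cross a b)) = r * norm3 (cross a b).
  by rewrite norm3_cross_orth ?dot_cross_r.
have t1 : norm3 (scalev (dot a b) (cross b (cross b (cross c b))))
          <= norm3 a * r * (r * (r * norm3 (cross b c))).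
  rewrite norm3_scalev norm3_cross_orth ?dot_cross_l // bbcb.
  by apply: ler_wpM2r; [rewrite !mulr_ge0 ?norm3_ge0 ?ltW | exact: cauchy_schwarz].
have t2 : norm3 (scalev (dot c b) (cross (cross b (cross a b)) b))
          <= norm3 c * r * (r * norm3 (cross a b) * r).
  rewrite norm3_scalev norm3_cross_orth ?(dotC _ b) ?dot_cross_l // bab.
  apply: ler_wpM2r; first by rewrite !mulr_ge0 ?norm3_ge0 ?ltW.
  by rewrite dotC; exact: cauchy_schwarz.
have t3 : norm3 (cross (cross b (cross a b)) (cross b (cross c b)))
          <= r * norm3 (cross a b) * (r * norm3 (cross b c)).
  by rewrite -bab -bbcb norm3_cross_le.
have key : r ^+ 4 * norm3 (cross a c) <=
  r ^+ 3 * (norm3 a * norm3 (cross b c) + norm3 c * norm3 (cross a b))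
  + r ^+ 2 * (norm3 (cross a b) * norm3 (cross b c)).
  rewrite -r4 cross_decomp_along.
  apply: le_trans (norm3_addv_le _ _) _; apply: le_trans (lerD (norm3_addv_le _ _) t3) _.
  by apply: le_trans (lerD (lerD t1 t2) (lexx _)) _; lra.
have r0 : r != 0 by rewrite gt_eqF.
rewrite -(ler_pM2l (exprn_gt0 4 b_gt0)); apply: le_trans key _.
by rewrite -/r le_eqVlt; apply/orP; left; apply/eqP; field.
Qed.

Lemma norm3_cross_le_gap a b c (eps xi oa oc : R) :
  0 < xi -> xi < 2 * norm3 b ->
  2 * norm3 (cross a b) <= eps -> 2 * norm3 (cross b c) <= eps ->
  norm3 a <= oa -> norm3 c <= oc ->
  2 * norm3 (cross a c) <= 2 * eps / xi * (oa + oc + eps / xi).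
Proof.
move=> xi_gt0 gap ab_le bc_le a_le c_le.
have b_gt0 : 0 < norm3 b by have := norm3_ge0 b; lra.
have [ab0 bc0] := (norm3_ge0 (cross a b), norm3_ge0 (cross b c)).
have [a0 c0] := (norm3_ge0 a, norm3_ge0 c).
have inv_le : (norm3 b)^-1 <= 2 / xi.
  by rewrite -[2 / xi]invf_div lef_pV2 ?posrE ?divr_gt0 // ler_pdivrMr; lra.
have inv_ge0 : 0 <= (norm3 b)^-1 by rewrite invr_ge0 ltW.
have lin_le : norm3 a * norm3 (cross b c) + norm3 c * norm3 (cross a b)
              <= (oa + oc) * (eps / 2).
  by rewrite mulrDl; apply: lerD; apply: ler_pM => //; lra.
have quad_le : norm3 (cross a b) * norm3 (cross b c) <= (eps / 2) ^+ 2.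
  by rewrite expr2; apply: ler_pM => //; lra.
have inv2_le : (norm3 b ^+ 2)^-1 <= (2 / xi) ^+ 2.
  by rewrite -exprVn ler_pXn2r // nnegrE ?divr_ge0 ?ltW.
have ac_le : norm3 (cross a c) <=
    (oa + oc) * (eps / 2) * (2 / xi) + (eps / 2) ^+ 2 * (2 / xi) ^+ 2.
  apply: le_trans (norm3_cross_le_along a c b_gt0) _; apply: lerD; apply: ler_pM => //.
  - by rewrite addr_ge0 ?mulr_ge0.
  - by rewrite mulr_ge0.
  - by rewrite invr_ge0 exprn_ge0 ?norm3_ge0.
have -> : 2 * eps / xi * (oa + oc + eps / xi) =
    2 * ((oa + oc) * (eps / 2) * (2 / xi) + (eps / 2) ^+ 2 * (2 / xi) ^+ 2).
  by field; rewrite gt_eqF.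
by rewrite ler_pM2l.
Qed.

End Vec3.

Local Notation Re := complex.Re.
Local Notation Im := complex.Im.

Section ComplexParts.
Variable R : rcfType.
Implicit Types x y : R[i].

Lemma complexReD x y : Re (x + y) = Re x + Re y.
Proof. by case: x y => ? ? [? ?]. Qed.
Lemma complexImD x y : Im (x + y) = Im x + Im y.
Proof. by case: x y => ? ? [? ?]. Qed.
Lemma complexReN x : Re (- x) = - Re x.
Proof. by case: x. Qed.
Lemma complexImN x : Im (- x) = - Im x.
Proof. by case: x. Qed.
Lemma complexReM x y : Re (x * y) = Re x * Re y - Im x * Im y.
Proof. by case: x y => ? ? [? ?]. Qed.
Lemma complexImM x y : Im (x * y) = Re x * Im y + Im x * Re y.
Proof. by case: x y => ? ? [? ?]. Qed.
Lemma complexReJ x : Re (conjc x) = Re x.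
Proof. by case: x. Qed.
Lemma complexImJ x : Im (conjc x) = - Im x.
Proof. by case: x. Qed.

Lemma sqr_normc x : Normc.normc x ^+ 2 = Re x ^+ 2 + Im x ^+ 2.
Proof. by case: x => ? ? /=; rewrite sqr_sqrtr ?addr_ge0 ?sqr_ge0. Qed.

Lemma conjc_fixed_Im x : x = conjc x -> Im x = 0.
Proof. by case: x => a b [] /eqP; rewrite -subr_eq0 opprK -mulr2n mulrn_eq0 => /eqP. Qed.

Definition complexE :=
  (complexReD, complexImD, complexReN, complexImN, complexReM, complexImM).

End ComplexParts.

Lemma big_ord2 (V : nmodType) (F : 'I_2 -> V) : \sum_(k < 2) F k = F 0 + F 1.
Proof.
by rewrite !big_ord_recl big_ord0 addr0 (_ : lift ord0 ord0 = 1) //; exact: val_inj.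
Qed.

Lemma det_mx22 (T : comNzRingType) (M : 'M[T]_2) :
  \det M = M 0 0 * M 1 1 - M 0 1 * M 1 0.
Proof.
rewrite (expand_det_row _ 0) big_ord2 /cofactor !det_mx11 !mxE /=.
rewrite expr0 expr1 mul1r mulN1r mulrN.
by congr (_ * M _ _ - _ * M _ _); apply: val_inj.
Qed.

Lemma eigenvalue_mx22 (F : fieldType) (M : 'M[F]_2) a :
  eigenvalue M a = ((a - M 0 0) * (a - M 1 1) - M 0 1 * M 1 0 == 0).
Proof.
rewrite eigenvalue_root_char /root /char_poly /char_poly_mx det_mx22 !mxE /=.
by rewrite !hornerE mulrNN.
Qed.

Section Matrix2.
Variable R : realType.
Local Open Scope classical_set_scope.
Implicit Types (A B C N : 'M[R[i]]_2) (v : 'cV[R[i]]_2).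

Definition sqvnorm v : R := Normc.normc (v 0 0) ^+ 2 + Normc.normc (v 1 0) ^+ 2.

Lemma sqvnorm_ge0 v : 0 <= sqvnorm v.
Proof. by rewrite /sqvnorm addr_ge0 ?sqr_ge0. Qed.

Lemma vnormE v : vnorm v = Num.sqrt (sqvnorm v).
Proof. by rewrite /vnorm big_ord2. Qed.

Lemma sqvnorm_unit v : vnorm v = 1 -> sqvnorm v = 1.
Proof.
by rewrite vnormE => /(congr1 (fun r => r ^+ 2)); rewrite sqr_sqrtr ?sqvnorm_ge0 ?expr1n.
Qed.

Lemma sqvnorm_delta (k : 'I_2) : sqvnorm (delta_mx k 0) = 1.
Proof. by rewrite /sqvnorm !sqr_normc !mxE; case: k => [[|[|]]] //= _; lra. Qed.

Lemma vnorm_delta (k : 'I_2) : vnorm (delta_mx k 0 : 'cV[R[i]]_2) = 1.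
Proof. by rewrite vnormE sqvnorm_delta sqrtr1. Qed.

Lemma sqr_normc_dot2_le (m0 m1 x0 x1 : R[i]) :
  Normc.normc (m0 * x0 + m1 * x1) ^+ 2 <=
  (Normc.normc m0 ^+ 2 + Normc.normc m1 ^+ 2) * (Normc.normc x0 ^+ 2 + Normc.normc x1 ^+ 2).
Proof.
rewrite !sqr_normc !complexE -subr_ge0.
move: (Re m0) (Im m0) (Re m1) (Im m1) (Re x0) (Im x0) (Re x1) (Im x1) => a b c d e f g h.
(* Lagrange's identity in C^2 *)
rewrite [X in 0 <= X](_ : _ =
  (a * g + b * h - c * e - d * f) ^+ 2 + (b * g - a * h - d * e + c * f) ^+ 2).
  by rewrite addr_ge0 ?sqr_ge0.
by ring.
Qed.

Definition sqfrob N : R :=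
  Normc.normc (N 0 0) ^+ 2 + Normc.normc (N 0 1) ^+ 2 +
  (Normc.normc (N 1 0) ^+ 2 + Normc.normc (N 1 1) ^+ 2).

Lemma sqvnorm_mulmx_le N v : sqvnorm (N *m v) <= sqfrob N * sqvnorm v.
Proof. by rewrite /sqvnorm !mxE !big_ord2 /sqfrob mulrDl lerD ?sqr_normc_dot2_le. Qed.

Lemma vnorm_mulmx_le_opnorm N v : vnorm v = 1 -> vnorm (N *m v) <= opnorm N.
Proof.
move=> v1; apply: sup_upper_bound; last by exists v.
split; first by exists (vnorm (N *m v)), v.
exists (Num.sqrt (sqfrob N)) => _ [x /= /sqvnorm_unit x1 <-].
rewrite vnormE ler_sqrt ?addr_ge0 ?sqr_ge0 //.
by rewrite -[sqfrob N]mulr1 -x1 sqvnorm_mulmx_le.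
Qed.

Lemma opnorm_eq_sqrt N s :
  (forall v, sqvnorm (N *m v) = s * sqvnorm v) -> opnorm N = Num.sqrt s.
Proof.
move=> Ns; rewrite /opnorm (_ : [set _ | _ in _] = [set Num.sqrt s]) ?sup1 //.
apply/seteqP; split => [_ [x /= /sqvnorm_unit x1 <-]|_ ->] /=.
  by rewrite vnormE Ns x1 mulr1.
by exists (delta_mx 0 0); rewrite /= ?vnorm_delta // vnormE Ns sqvnorm_delta mulr1.
Qed.

Lemma herm2_coords A : herm2 A ->
  [/\ Im (A 0 0) = 0, Im (A 1 1) = 0, Re (A 1 0) = Re (A 0 1) & Im (A 1 0) = - Im (A 0 1)].
Proof.
move=> hA; split; rewrite ?[A 1 0]hA ?complexReJ ?complexImJ //.
  by apply: conjc_fixed_Im; exact: hA.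
by apply: conjc_fixed_Im; exact: hA.
Qed.

(* Coordinates of the traceless part of A in the Pauli basis,
   A = (tr A / 2) I + x s_x - y s_y + z s_z; the sign of y is immaterial
   since only lengths of these vectors and of their cross products matter. *)
Definition pauli A : vec3 R :=
  Vec3 (Re (A 0 1)) (Im (A 0 1)) ((Re (A 0 0) - Re (A 1 1)) / 2).

Lemma sqvnorm_comm A B v : herm2 A -> herm2 B ->
  sqvnorm (comm A B *m v) = (2 * norm3 (cross (pauli A) (pauli B))) ^+ 2 * sqvnorm v.
Proof.
move=> /herm2_coords [a1 a2 a3 a4] /herm2_coords [b1 b2 b3 b4].
rewrite exprMn sqr_norm3 /sqvnorm !sqr_normc /comm !mxE !big_ord2 !mxE !big_ord2.
rewrite !complexE a1 a2 a3 a4 b1 b2 b3 b4 /pauli /cross /dot /=.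
by field.
Qed.

Lemma opnorm_comm_herm2 A B : herm2 A -> herm2 B ->
  opnorm (comm A B) = 2 * norm3 (cross (pauli A) (pauli B)).
Proof.
move=> hA hB; rewrite (opnorm_eq_sqrt (fun v => sqvnorm_comm v hA hB)).
by rewrite sqrtr_sqr ger0_norm ?mulr_ge0 ?norm3_ge0.
Qed.

Lemma norm3_pauli_le_opnorm A : herm2 A -> norm3 (pauli A) <= opnorm A.
Proof.
move=> /[dup] hA /herm2_coords [a1 a2 a3 a4].
have /= := vnorm_mulmx_le_opnorm A (vnorm_delta 0).
have /= := vnorm_mulmx_le_opnorm A (vnorm_delta 1).
rewrite !vnormE /sqvnorm !sqr_normc !mxE !big_ord2 !mxE /= !complexE a1 a2 a3 a4.
rewrite /norm3 /dot /pauli /=.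
set p := Re (A 0 0); set q := Re (A 1 1); set x := Re (A 0 1); set y := Im (A 0 1).
have [pq|qp] := lerP (q ^+ 2) (p ^+ 2) => le1 le0.
- by apply: le_trans le0; rewrite ler_sqrt ?addr_ge0 ?sqr_ge0 //; nra.
- by apply: le_trans le1; rewrite ler_sqrt ?addr_ge0 ?sqr_ge0 //; nra.
Qed.

Lemma eigenvalue_herm2 B l : herm2 B -> eigenvalue B (Complex l 0) ->
  (l - (Re (B 0 0) + Re (B 1 1)) / 2) ^+ 2 = norm3 (pauli B) ^+ 2.
Proof.
move=> /herm2_coords [b1 b2 b3 b4]; rewrite eigenvalue_mx22 => /eqP/(congr1 (@Re R)).
rewrite !complexE b1 b2 b3 b4 sqr_norm3 /dot /pauli /=.
lra.
Qed.

(* If B had no real eigenvalue, lmax B = lmin B = 0 by the junk value of sup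
   and inf on the empty set; the bound still holds. *)
Lemma spectral_gap_herm2 B : herm2 B -> lmax B - lmin B <= 2 * norm3 (pauli B).
Proof.
move=> hB; set m := (Re (B 0 0) + Re (B 1 1)) / 2; set n := norm3 (pauli B).
have n_ge0 : 0 <= n := norm3_ge0 _.
have eig_bound l : eigenvalue B (Complex l 0) -> m - n <= l <= m + n.
  move=> /(eigenvalue_herm2 hB); rewrite -/m -/n => /eqP; rewrite eqf_sqr.
  by case/orP => /eqP h; apply/andP; split; lra.
rewrite /lmax /lmin; set S := [set l : R | eigenvalue B (Complex l 0)].
have [[l0 Sl0]|S0] := pselect (exists l, S l).
- have h1 : sup S <= m + n by apply: ge_sup; [exists l0 | move=> l /eig_bound /andP []].
  have h2 : m - n <= inf S by apply: lb_le_inf; [exists l0 | move=> l /eig_bound /andP []].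
  lra.
- have -> : S = set0 by apply/seteqP; split => l // Sl; apply: S0; exists l.
  by rewrite sup0 inf0 subrr mulr_ge0.
Qed.

End Matrix2.

Lemma small_ratio_bounds (R : realFieldType) (eps xi oa oc : R) :
  0 < xi -> 0 <= eps -> eps <= xi -> oa <= 1 -> oc <= 1 ->
  2 * eps / xi * (oa + oc + eps / xi) <= 4 * eps / xi + 2 * eps ^+ 2 / xi ^+ 2 /\
  4 * eps / xi + 2 * eps ^+ 2 / xi ^+ 2 <= 6 * eps / xi.
Proof.
move=> xi_gt0 eps_ge0 eps_le oa_le1 oc_le1.
have u_ge0 : 0 <= eps / xi by rewrite divr_ge0 // ltW.
have u_le1 : eps / xi <= 1 by rewrite ler_pdivrMr ?mul1r.
by rewrite -exprVn; split; nra.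
Qed.

Theorem lemma3p6 (R : realType) (A B C : 'M[R[i]]_2) (xi eps : R) :
  herm2 A -> herm2 B -> herm2 C ->
  0 < xi -> 0 <= eps -> lmax B - lmin B > xi ->
  opnorm (comm A B) <= eps -> opnorm (comm B C) <= eps ->
  opnorm (comm A C) <= 2 * eps / xi * (opnorm A + opnorm C + eps / xi) /\
  (opnorm A <= 1 -> opnorm C <= 1 -> eps <= xi -> 0 < eps ->
   opnorm (comm A C) <= 4 * eps / xi + 2 * eps ^+ 2 / xi ^+ 2 /\
   4 * eps / xi + 2 * eps ^+ 2 / xi ^+ 2 <= 6 * eps / xi).
Proof.
move=> hA hB hC xi_gt0 _ gap_gt ab_le bc_le.
rewrite (opnorm_comm_herm2 hA hB) in ab_le; rewrite (opnorm_comm_herm2 hB hC) in bc_le.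
have gap := lt_le_trans gap_gt (spectral_gap_herm2 hB).
have bound := norm3_cross_le_gap xi_gt0 gap ab_le bc_le
  (norm3_pauli_le_opnorm hA) (norm3_pauli_le_opnorm hC).
rewrite (opnorm_comm_herm2 hA hC); split => // oA_le1 oC_le1 eps_le eps_gt0.
have [le1 le2] := small_ratio_bounds xi_gt0 (ltW eps_gt0) eps_le oA_le1 oC_le1.
by split => //; apply: le_trans bound le1.
Qed.
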